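(* Let $k\ge2$, let $f:(k+1)^V\to\mathbb{R}_{\ge0}$ be non-negative and $k$-submodular with multilinear extension $F$, let $OPT=\max_{S\in(k+1)^V}f(S)$, and let $c>0$. Consider the meta-framework with step $\delta=1/N$, and suppose that at every iteration $t$ the direction $v(t)$ satisfies the following property, where $y=\nabla F(s(t))$ (i.e. $y_{i,j}=\frac{\partial F}{\partial x_{i,j}}(s(t))$): for every $a\in\mathbb{R}^{n\times k}$ with $a_{i,j}+a_{i,j'}\ge 0$ for all $i$ and all $j\neq j'$, and $a_{i,j}\le y_{i,j}$ for all $i,j$, and for every map $j^*:[n]\to[k]$, $$\sum_{i\in[n]}\sum_{j\in[k]}v_{i,j}(t)\big(a_{i,j^*(i)}-a_{i,j}\big)\ \le\ c\sum_{i\in[n]}\sum_{j\in[k]}v_{i,j}(t)\,y_{i,j}.$$ Then for every $\varepsilon>0$ there is $N_0$ (depending on $n,k,c,f,\varepsilon$) such that for all $N\ge N_0$, the output satisfies $s(N)\in\mathcal P$ and $F(s(N))\ge\frac{1}{c+1}OPT-\varepsilon$.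
   Context: Let $V=[n]=\{1,\dots,n\}$ and let $k\ge 1$ be an integer. Write $(k+1)^V$ for the set of $k$-tuples $S=(S_1,\dots,S_k)$ of pairwise disjoint subsets of $V$. For $S,T\in(k+1)^V$ let $S\sqcap T=(S_1\cap T_1,\dots,S_k\cap T_k)$ and let $S\sqcup T$ be the tuple whose $j$-th component is $(S_j\cup T_j)\setminus\bigcup_{l\neq j}(S_l\cup T_l)$. A function $f:(k+1)^V\to\mathbb{R}$ is $k$-submodular if $f(S)+f(T)\ge f(S\sqcap T)+f(S\sqcup T)$ for all $S,T\in(k+1)^V$. Let $\mathcal P=\{x\in[0,1]^{n\times k}:\sum_{j=1}^k x_{i,j}\le 1\ \forall i\in[n]\}$. The multilinear extension of $f$ is the polynomial $F(x)=\sum_{S\in(k+1)^V} f(S_1,\dots,S_k)\Big(\prod_{j\in[k]}\prod_{i\in S_j}x_{i,j}\Big)\prod_{i\in V\setminus\bigcup_j S_j}\Big(1-\sum_{j=1}^k x_{i,j}\Big)$, considered on $\mathcal P$. Meta-framework: fix a positive integer $N$ and $\delta=1/N$. Set $s(0)=0\in\mathbb{R}^{n\times k}$. For $t=0,1,\dots,N-1$, choose a direction $v(t)\in[0,1]^{n\times k}$ with $\sum_{j=1}^k v_{i,j}(t)=1$ for every $i\in[n]$ (the choice may depend on $s(t)$ and on $F$), and set $s(t+1)=s(t)+\delta\,v(t)$. The output is $s(N)$. *)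

From HB Require Import structures.
From mathcomp Require Import all_boot all_order all_algebra.
From mathcomp Require Import all_classical all_reals all_analysis.
Set Implicit Arguments. Unset Strict Implicit. Unset Printing Implicit Defensive.
Import Order.TTheory GRing.Theory Num.Theory.
Local Open Scope ring_scope.

Definition ktuple (n k : nat) := {ffun 'I_k -> {set 'I_n}}.

(* membership in (k+1)^V : components pairwise disjoint *)
Definition kdisj n k (S : ktuple n k) : bool :=
  [forall j : 'I_k, forall l : 'I_k, (j != l) ==> [disjoint S j & S l]].

Definition kmeet n k (S T : ktuple n k) : ktuple n k :=
  [ffun j => S j :&: T j].

Definition kjoin n k (S T : ktuple n k) : ktuple n k :=
  [ffun j => (S j :|: T j) :\: \bigcup_(l | l != j) (S l :|: T l)].

Definition k_submodular (R : realType) n k (f : ktuple n k -> R) : Prop :=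
  forall S T, kdisj S -> kdisj T ->
    f (kmeet S T) + f (kjoin S T) <= f S + f T.

(* OPT = max_{S in (k+1)^V} f S  (f is nonnegative, so 0 is a harmless seed) *)
Definition kOPT (R : realType) n k (f : ktuple n k -> R) : R :=
  \big[Num.max/0]_(S : ktuple n k | kdisj S) f S.

Definition multilinext (R : realType) n k (f : ktuple n k -> R)
    (x : 'M[R]_(n, k)) : R :=
  \sum_(S : ktuple n k | kdisj S)
    f S * (\prod_(j < k) \prod_(i in S j) x i j)
        * \prod_(i in ~: \bigcup_(j < k) S j) (1 - \sum_(j < k) x i j).

Definition inP (R : realType) n k (x : 'M[R]_(n, k)) : Prop :=
  (forall i j, 0 <= x i j <= 1) /\ (forall i, \sum_(j < k) x i j <= 1).

Definition partialF (R : realType) n k (F : 'M[R]_(n, k) -> R)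
    (x : 'M[R]_(n, k)) (i : 'I_n) (j : 'I_k) : R :=
  derive1 (fun t : R => F (x + t *: delta_mx i j)) 0.

Definition is_direction (R : realType) n k (v : 'M[R]_(n, k)) : Prop :=
  (forall i j, 0 <= v i j <= 1) /\ (forall i, \sum_(j < k) v i j = 1).

Definition good_direction (R : realType) n k (c : R)
    (y v : 'M[R]_(n, k)) : Prop :=
  forall a : 'M[R]_(n, k),
    (forall i (j j' : 'I_k), j != j' -> 0 <= a i j + a i j') ->
    (forall i j, a i j <= y i j) ->
    forall jstar : 'I_n -> 'I_k,
      \sum_(i < n) \sum_(j < k) v i j * (a i (jstar i) - a i j)
        <= c * \sum_(i < n) \sum_(j < k) v i j * y i j.

Definition traj (R : realType) n k (N : nat) (v : nat -> 'M[R]_(n, k))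
    (t : nat) : 'M[R]_(n, k) :=
  \sum_(u < t) (N%:R)^-1 *: v u.

From HB Require Import structures.
From mathcomp Require Import all_boot all_order all_algebra.
From mathcomp Require Import all_classical all_reals all_analysis.
From mathcomp Require Import ring lra.
Import Order.TTheory GRing.Theory Num.Theory.
Local Open Scope ring_scope.
Set Implicit Arguments. Unset Strict Implicit. Unset Printing Implicit Defensive.

(* A point x is an n x k matrix whose row i is a sub-probability vector (the
   distribution of element i over the k labels).  The key structural fact is
   that the multilinear extension F is affine in each row separately
   (row_affine); hence it is determined by its values at the vertices, where
   it equals f, and an inequality between row-affine functions holds on the
   whole product of simplices as soon as it holds at the vertices
   (row_affine_ge0).  The good direction property applied to the marginals at
     o(t) >= x(t) bounds the loss F(o(t)) - F(o(t+1)) by c times the gain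
     F(x(t+1)) - F(x(t)), up to O(1/N^2); summing over the N steps gives
     F(O) <= (c+1) (F(x(N)) + O(1/N)), whence the theorem. *)

(* k-tuples of disjoint sets are the same as partial labellings
   s : 'I_n -> option 'I_k; meet and join become pointwise operations *)
Section Labellings.
Variables (n k : nat).
Implicit Types (s t : 'I_n -> option 'I_k) (S : ktuple n k).

Lemma eqSome (T : eqType) (a b : T) : (Some a == Some b) = (a == b).
Proof. by []. Qed.

Definition ktuple_of s : ktuple n k := [ffun l => [set i | s i == Some l]].
Definition label_of S (i : 'I_n) : option 'I_k := [pick j | i \in S j].

Definition meet_label s t i := if s i == t i then s i else None.
Definition join_label s t i : option 'I_k :=
  match s i, t i with
  | None, b => b
  | a, None => a
  | Some a, Some b => if a == b then Some a else None
  end.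

Lemma kdisjP S i j l : kdisj S -> i \in S j -> i \in S l -> j = l.
Proof.
move=> /forallP /(_ j) /forallP /(_ l) H ij il; apply/eqP; apply: contraT => ne.
by move: H; rewrite ne /= => /disjointFr /(_ ij); rewrite il.
Qed.

Lemma kdisj_ktuple_of s : kdisj (ktuple_of s).
Proof.
apply/forallP=> j; apply/forallP=> l; apply/implyP=> ne.
rewrite finset.disjoints_subset; apply/fintype.subsetP => i; rewrite !ffunE !inE => /eqP ->.
by apply: contra ne => /eqP [->].
Qed.

Lemma ktuple_of_ext s t : s =1 t -> ktuple_of s = ktuple_of t.
Proof. by move=> e; apply/ffunP=> l; apply/setP=> i; rewrite !ffunE !inE e. Qed.

Lemma label_of_ktuple s i : label_of (ktuple_of s) i = s i.
Proof.
rewrite /label_of; case: pickP => [j|]; first by rewrite ffunE inE => /eqP.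
by case E: (s i) => [a|] // /(_ a); rewrite ffunE inE E eqxx.
Qed.

Lemma ktuple_of_label S : kdisj S -> ktuple_of (label_of S) = S.
Proof.
move=> HS; apply/ffunP=> l; apply/setP=> i; rewrite ffunE inE /label_of.
case: pickP => [j Hj|Hn]; last by rewrite Hn.
apply/eqP/idP => [[<-] //|Hl]; congr Some; exact: kdisjP HS Hj Hl.
Qed.

Lemma kmeet_ktuple_of s t :
  kmeet (ktuple_of s) (ktuple_of t) = ktuple_of (meet_label s t).
Proof.
apply/ffunP=> l; apply/setP=> i; rewrite !ffunE !inE /meet_label.
case: (s i) => [a|]; case: (t i) => [b|] //=; rewrite ?andbF //.
rewrite !eqSome; case: (eqVneq a b) => [->|ne]; rewrite ?andbb ?eqSome //.
apply/negbTE/andP => -[/eqP ea /eqP eb]; by move: ne; rewrite ea eb eqxx.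
Qed.

Lemma kjoin_ktuple_of s t :
  kjoin (ktuple_of s) (ktuple_of t) = ktuple_of (join_label s t).
Proof.
apply/ffunP=> l; apply/setP=> i; rewrite !ffunE finset.in_setD.
have -> : (i \in \bigcup_(l' | l' != l) (ktuple_of s l' :|: ktuple_of t l')) =
   ((s i != None) && (s i != Some l)) || ((t i != None) && (t i != Some l)).
  apply/finset.bigcupP/idP => [[l' nl']|].
    by rewrite finset.in_setU !ffunE !inE => /orP [] /eqP ->; rewrite /= ?eqSome nl' ?orbT.
  case Es: (s i) => [a|]; case Et: (t i) => [b|]; rewrite /= ?eqSome ?orbF ?andbF //= => H.
  - case/orP: H => H; [exists a | exists b];
      by rewrite // finset.in_setU !ffunE !inE ?Es ?Et ?eqxx ?orbT.
  - by exists a; rewrite // finset.in_setU !ffunE !inE ?Es ?Et ?eqxx ?orbT.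
  - by exists b; rewrite // finset.in_setU !ffunE !inE ?Es ?Et ?eqxx ?orbT.
rewrite finset.in_setU !inE /join_label.
case: (s i) => [a|]; case: (t i) => [b|]; rewrite /= ?eqSome ?andbF ?orbF ?andbT //=.
- case: (eqVneq a l) => [al|al]; case: (eqVneq b l) => [bl|bl]; subst; rewrite ?eqxx //=.
  + by rewrite [l == b]eq_sym (negPf bl).
  + by rewrite (negPf al).
  + by case: ifP => // _; rewrite eqSome (negPf al).
- by rewrite negbK andbb.
- by rewrite negbK andbb.
Qed.

Lemma k_submodular_label (R : realType) (f : ktuple n k -> R) s t :
  k_submodular f ->
  f (ktuple_of (meet_label s t)) + f (ktuple_of (join_label s t))
    <= f (ktuple_of s) + f (ktuple_of t).
Proof.
move=> fsub; rewrite -kmeet_ktuple_of -kjoin_ktuple_of.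
by apply: fsub; exact: kdisj_ktuple_of.
Qed.

End Labellings.

Section RowAffine.
Variables (R : realType) (n k : nat).
Local Notation M := 'M[R]_(n, k).

Definition setrow (z : M) (i : 'I_n) (u : 'I_k -> R) : M :=
  \matrix_(i', j) if i' == i then u j else z i' j.

Definition erow (j : 'I_k) : 'I_k -> R := fun l => (l == j)%:R.
Definition zrow : 'I_k -> R := fun _ => 0.

Definition marginal (G : M -> R) i j (z : M) : R :=
  G (setrow z i (erow j)) - G (setrow z i zrow).

Definition row_affine (G : M -> R) := forall z i u,
  G (setrow z i u) = G (setrow z i zrow) + \sum_j u j * marginal G i j z.

Lemma setrowE z i u i' j : setrow z i u i' j = if i' == i then u j else z i' j.
Proof. by rewrite mxE. Qed.

Lemma setrow_id z i u w : setrow (setrow z i u) i w = setrow z i w.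
Proof. by apply/matrixP=> a b; rewrite !mxE; case: eqP. Qed.

Lemma setrow_comm z i i' u w : i != i' ->
  setrow (setrow z i u) i' w = setrow (setrow z i' w) i u.
Proof.
move=> nii'; apply/matrixP=> a b; rewrite !mxE.
case: (eqVneq a i') => [Ha|]; case: (eqVneq a i) => [Hb|] //.
by move: nii'; rewrite -Ha -Hb eqxx.
Qed.

Lemma setrow_self z i : setrow z i (fun j => z i j) = z.
Proof. by apply/matrixP=> a b; rewrite !mxE; case: eqP => // ->. Qed.

Lemma marginal_setrow G i j z w : marginal G i j (setrow z i w) = marginal G i j z.
Proof. by rewrite /marginal !setrow_id. Qed.

Lemma row_affine_val G z i : row_affine G ->
  G z = G (setrow z i zrow) + \sum_j z i j * marginal G i j z.
Proof. by move=> HG; rewrite -{1}(setrow_self z i) HG. Qed.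

Lemma row_affine_diff G z i u w : row_affine G ->
  G (setrow z i u) - G (setrow z i w) = \sum_j (u j - w j) * marginal G i j z.
Proof.
move=> HG; rewrite (HG z i u) (HG z i w) opprD addrACA subrr add0r -sumrB.
by apply: eq_bigr => j _; rewrite mulrBl.
Qed.

Lemma row_affine_conv G x i : row_affine G ->
  G x = (1 - \sum_j x i j) * G (setrow x i zrow)
        + \sum_j x i j * G (setrow x i (erow j)).
Proof.
move=> HG; rewrite (row_affine_val x i HG) /marginal mulrBl mul1r mulr_suml -addrA.
congr (_ + _); rewrite addrC -sumrB; apply: eq_bigr => j _; by rewrite mulrBr.
Qed.

Lemma row_affine_marginal G r j : row_affine G -> row_affine (marginal G r j).
Proof.
move=> HG z i u; case: (eqVneq i r) => [->|nir].
  rewrite !marginal_setrow big1 ?addr0 // => l _.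
  by rewrite [marginal (marginal _ _ _) _ _ _]/marginal !marginal_setrow subrr mulr0.
rewrite /marginal !(setrow_comm _ _ _ nir).
rewrite (HG (setrow z r (erow j)) i u) (HG (setrow z r zrow) i u) /marginal.
under [in RHS]eq_bigr => l _ do rewrite !(setrow_comm _ _ _ nir).
rewrite opprD addrACA -sumrB; congr (_ + _); apply: eq_bigr => l _.
rewrite -mulrBr; congr (_ * _); ring.
Qed.

Lemma row_affine_add (G1 G2 : M -> R) : row_affine G1 -> row_affine G2 ->
  row_affine (fun z => G1 z + G2 z).
Proof.
move=> H1 H2 z i u /=; rewrite (H1 z i u) (H2 z i u) addrACA -big_split /=.
congr (_ + _); apply: eq_bigr => j _; rewrite /marginal; ring.
Qed.

Lemma row_affine_opp (G : M -> R) : row_affine G -> row_affine (fun z => - G z).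
Proof.
move=> H z i u /=; rewrite (H z i u) opprD -sumrN; congr (_ + _).
apply: eq_bigr => j _; rewrite /marginal; ring.
Qed.

Lemma row_affine_sum (I : finType) (P : pred I) (G : I -> M -> R) :
  (forall a, P a -> row_affine (G a)) ->
  row_affine (fun x => \sum_(a | P a) G a x).
Proof.
move=> H z i u /=.
rewrite (eq_bigr _ (fun a Pa => H a Pa z i u)) big_split /=; congr (_ + _).
rewrite exchange_big /=; apply: eq_bigr => j _.
by rewrite /marginal -sumrB mulr_sumr.
Qed.

Definition splice (x x' : M) (r : nat) : M :=
  \matrix_(i, j) if (i < r)%N then x' i j else x i j.

Lemma splice0 x x' : splice x x' 0 = x.
Proof. by apply/matrixP=> a b; rewrite !mxE. Qed.

Lemma splice_all x x' : splice x x' n = x'.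
Proof. by apply/matrixP=> a b; rewrite !mxE ltn_ord. Qed.

Lemma spliceS x x' (r : 'I_n) :
  splice x x' r.+1 = setrow (splice x x' r) r (fun j => x' r j).
Proof.
apply/matrixP=> a b; rewrite !mxE ltnS leq_eqVlt.
case: (eqVneq a r) => [->|]; first by rewrite eqxx.
by move/negPf; rewrite -val_eqE /= => ->.
Qed.

Lemma splice_self x x' (r : 'I_n) :
  splice x x' r = setrow (splice x x' r) r (fun j => x r j).
Proof.
apply/matrixP=> a b; rewrite !mxE.
by case: (eqVneq a r) => [->|//]; rewrite ltnn.
Qed.

Lemma row_affine_telescope G x x' : row_affine G ->
  G x' - G x =
  \sum_(r < n) \sum_j (x' r j - x r j) * marginal G r j (splice x x' r).
Proof.
move=> HG; rewrite -{1}(splice_all x x') -{2}(splice0 x x').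
rewrite -(telescope_sumr (fun r => G (splice x x' r)) (leq0n n)) big_mkord.
apply: eq_bigr => r _; rewrite spliceS {2}(splice_self x x' r).
exact: row_affine_diff.
Qed.

Definition vertex (s : 'I_n -> option 'I_k) : M :=
  \matrix_(i, j) (s i == Some j)%:R.

Definition in_simplices (x : M) :=
  forall i, (forall j, 0 <= x i j) /\ \sum_j x i j <= 1.

Lemma in_simplices_setrow x i u : in_simplices x -> (forall j, 0 <= u j) ->
  \sum_j u j <= 1 -> in_simplices (setrow x i u).
Proof.
move=> Hx Hu Hs i'; case: (eqVneq i' i) => [->|ne].
  by split; [move=> j|under eq_bigr do rewrite setrowE eqxx]; rewrite ?setrowE ?eqxx.
by split; [move=> j|under eq_bigr do rewrite setrowE (negPf ne)];
   rewrite ?setrowE ?(negPf ne); case: (Hx i').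
Qed.

Lemma sum_erow (j : 'I_k) : \sum_l erow j l = 1.
Proof. by rewrite (bigD1 j) //= big1 ?addr0 /erow ?eqxx // => l /negPf ->. Qed.

Lemma in_simplices_erow x i j : in_simplices x -> in_simplices (setrow x i (erow j)).
Proof.
by move=> Hx; apply: in_simplices_setrow; rewrite ?sum_erow // => l; rewrite ler0n.
Qed.

Lemma in_simplices_zrow x i : in_simplices x -> in_simplices (setrow x i zrow).
Proof. by move=> Hx; apply: in_simplices_setrow => //; rewrite /zrow big1. Qed.

Lemma in_simplices_splice (x x' : M) r :
  in_simplices x -> in_simplices x' -> in_simplices (splice x x' r).
Proof.
move=> Hx Hx' i; split.
  by move=> j; rewrite mxE; case: ifP => _; [case: (Hx' i)|case: (Hx i)].
under eq_bigr => j _ do rewrite mxE.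
by case: (i < r)%N; [case: (Hx' i)|case: (Hx i)].
Qed.

Lemma in_simplices_le1 (x : M) i j : in_simplices x -> x i j <= 1.
Proof.
move=> /(_ i) [H0 H1]; apply: le_trans H1.
by rewrite (bigD1 j) //= lerDl sumr_ge0.
Qed.

Lemma sum_option (o : option 'I_k) : \sum_j ((o == Some j)%:R : R) = (o != None)%:R.
Proof.
case: o => [a|]; last by rewrite big1.
rewrite (bigD1 a) //= eqSome eqxx big1 ?addr0 // => j nj.
by rewrite eqSome eq_sym (negPf nj).
Qed.

Lemma in_simplices_vertex (s : 'I_n -> option 'I_k) : in_simplices (vertex s).
Proof.
move=> i; split=> [j|]; first by rewrite mxE ler0n.
under eq_bigr do rewrite mxE.
by rewrite sum_option; case: (s i != None); rewrite ?ler01.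
Qed.

(* a row-affine function nonnegative at the vertices is nonnegative on the
   whole product of simplices: fix the rows >= m to vertices and induct on m *)
Lemma row_affine_ge0 G : row_affine G -> (forall s, 0 <= G (vertex s)) ->
  forall x, in_simplices x -> 0 <= G x.
Proof.
move=> HG Hvert.
suff Q : forall m x s, in_simplices x ->
   (forall i : 'I_n, (m <= i)%N -> forall j, x i j = (s i == Some j)%:R) -> 0 <= G x.
  move=> x Hx; apply: (Q n x (fun _ => None)) => // i; by rewrite leqNgt ltn_ord.
elim=> [|m IH] x s Hx Hxs.
  suff -> : x = vertex s by [].
  by apply/matrixP=> a b; rewrite mxE Hxs.
case: (ltnP m n) => [lmn|lnm]; last first.
  apply: (IH x s Hx) => i; by rewrite leqNgt (leq_trans (ltn_ord i) lnm).
pose i0 := Ordinal lmn.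
have other_rows : forall u (i : 'I_n), (m <= i)%N -> i != i0 ->
    forall j, setrow x i0 u i j = (s i == Some j)%:R.
  move=> u i mi ne j; rewrite setrowE (negPf ne); apply: Hxs.
  rewrite ltn_neqAle mi andbT; apply: contra ne => /eqP e.
  by apply/eqP; apply: val_inj; rewrite /= e.
rewrite (row_affine_conv x i0 HG); apply: addr_ge0.
  apply: mulr_ge0; first by rewrite subr_ge0; case: (Hx i0).
  apply: (IH _ (fun i => if i == i0 then None else s i)); first exact: in_simplices_zrow.
  move=> i mi j; case: (eqVneq i i0) => [->|ne]; first by rewrite setrowE eqxx.
  exact: other_rows.
apply: sumr_ge0 => j _; apply: mulr_ge0; first by case: (Hx i0).
apply: (IH _ (fun i => if i == i0 then Some j else s i)); first exact: in_simplices_erow.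
move=> i mi l; case: (eqVneq i i0) => [->|ne].
  by rewrite setrowE eqxx /erow eq_sym.
exact: other_rows.
Qed.

End RowAffine.

Section MultilinearExtension.
Variables (R : realType) (n k : nat).
Local Notation M := 'M[R]_(n, k).
Variable f : ktuple n k -> R.
Local Notation F := (multilinext f).
Implicit Types (s : 'I_n -> option 'I_k) (S : ktuple n k).

Definition row_weight S i (r : 'I_k -> R) : R :=
  (\prod_(j < k) (if i \in S j then r j else 1)) *
  (if i \in \bigcup_(j < k) S j then 1 else 1 - \sum_j r j).

Lemma row_weight_ext S i r r' : r =1 r' -> row_weight S i r = row_weight S i r'.
Proof.
move=> e; rewrite /row_weight (eq_bigr _ (fun j _ => e j)).
by congr (_ * _); apply: eq_bigr => j _; rewrite e.
Qed.

Lemma weight_prod S (x : M) :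
  (\prod_(j < k) \prod_(i in S j) x i j) *
    \prod_(i in ~: \bigcup_(j < k) S j) (1 - \sum_(j < k) x i j)
  = \prod_i row_weight S i (fun j => x i j).
Proof.
have E1 : \prod_(j < k) \prod_(i in S j) x i j =
          \prod_i \prod_(j < k) (if i \in S j then x i j else 1).
  rewrite (eq_bigr (fun j => \prod_i (if i \in S j then x i j else 1))).
    by rewrite exchange_big.
  by move=> j _; rewrite big_mkcond.
have E2 : \prod_(i in ~: \bigcup_(j < k) S j) (1 - \sum_(j < k) x i j) =
   \prod_i (if i \in \bigcup_(j < k) S j then 1 else 1 - \sum_(j < k) x i j).
  rewrite big_mkcond; apply: eq_bigr => i _; rewrite finset.in_setC.
  by case: (i \in _).
by rewrite E1 E2 -big_split.
Qed.

Lemma row_weight_label S i r : kdisj S ->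
  row_weight S i r = if label_of S i is Some j then r j else 1 - \sum_j r j.
Proof.
move=> HS; rewrite /row_weight /label_of; case: pickP => [j0 Hj0|Hn].
  have -> : i \in \bigcup_(j < k) S j by apply/finset.bigcupP; exists j0.
  rewrite mulr1 (bigD1 j0) //= Hj0 big1 ?mulr1 // => j nj.
  case: ifP => // Hj; have e := kdisjP HS Hj0 Hj.
  by move: nj; rewrite e eqxx.
have -> : (i \in \bigcup_(j < k) S j) = false.
  by apply/negbTE/finset.bigcupP => -[j _]; rewrite Hn.
by rewrite big1 ?mul1r // => j _; rewrite Hn.
Qed.

Definition affine_row (h : ('I_k -> R) -> R) :=
  forall u, h u = h (@zrow R k) + \sum_j u j * (h (erow R j) - h (@zrow R k)).

Lemma affine_row_weight S i : kdisj S -> affine_row (row_weight S i).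
Proof.
move=> HS u; have wE := fun r => @row_weight_label S i r HS.
case E: (label_of S i) => [j0|].
  have wE' : forall r, row_weight S i r = r j0 by move=> r; rewrite wE E.
  rewrite !wE' (eq_bigr (fun j => u j * erow R j0 j)); last first.
    by move=> j _; rewrite !wE' /zrow subr0 /erow eq_sym.
  rewrite /zrow add0r (bigD1 j0) //= /erow eqxx mulr1 big1 ?addr0 // => j nj.
  by rewrite (negPf nj) mulr0.
have wE' : forall r, row_weight S i r = 1 - \sum_j r j by move=> r; rewrite wE E.
rewrite (eq_bigr (fun j => - u j)) => [|j _]; last first.
  by rewrite !wE' sum_erow /zrow big1_eq subrr subr0 sub0r mulrN1.
by rewrite !wE' /zrow big1_eq subr0 sumrN.
Qed.

Lemma row_affine_of_affine_row (G : M -> R) :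
  (forall z i, exists h Q, affine_row h /\ forall u, G (setrow z i u) = h u * Q) ->
  row_affine G.
Proof.
move=> H z i u; case: (H z i) => h [Q [Hh HG]].
rewrite /marginal !HG (Hh u) mulrDl mulr_suml; congr (_ + _).
by apply: eq_bigr => j _; rewrite HG -mulrBl mulrA.
Qed.

Definition ml_term S (x : M) := f S * \prod_i row_weight S i (fun j => x i j).

Lemma multilinext_terms (x : M) : F x = \sum_(S | kdisj S) ml_term S x.
Proof. by apply: eq_bigr => S _; rewrite /ml_term -mulrA weight_prod. Qed.

Lemma row_affine_ml_term S : kdisj S -> row_affine (ml_term S).
Proof.
move=> HS; apply: row_affine_of_affine_row => z i.
exists (row_weight S i), (f S * \prod_(i' | i' != i) row_weight S i' (fun j => z i' j)).
split=> [|u]; first exact: affine_row_weight.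
rewrite /ml_term (bigD1 i) //= (@row_weight_ext S i _ u); last first.
  by move=> j; rewrite setrowE eqxx.
rewrite (eq_bigr (fun i' => row_weight S i' (fun j => z i' j))); first by rewrite mulrCA.
by move=> i' ni'; apply: row_weight_ext => j; rewrite setrowE (negPf ni').
Qed.

Lemma row_affine_multilinext : row_affine F.
Proof.
have -> : F = (fun x => \sum_(S | kdisj S) ml_term S x).
  by apply: funext => x; exact: multilinext_terms.
exact: row_affine_sum row_affine_ml_term.
Qed.

Lemma row_weight_vertex S i s : kdisj S ->
  row_weight S i (fun j => vertex R s i j) = (label_of S i == s i)%:R.
Proof.
move=> HS; rewrite row_weight_label //; case: (label_of S i) => [j0|].
  by rewrite mxE eq_sym.
under eq_bigr do rewrite mxE.
by rewrite sum_option; case: (s i) => [a|] /=; rewrite ?subrr ?subr0.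
Qed.

Lemma prod_indicator (P : pred 'I_n) : \prod_i ((P i)%:R : R) = ([forall i, P i])%:R.
Proof.
case: (pickP (fun i => ~~ P i)) => [i Hi|Hn].
  rewrite (bigD1 i) //= (negPf Hi) mul0r.
  suff -> : [forall i, P i] = false by [].
  by apply/negbTE/forallP => /(_ i); rewrite (negPf Hi).
have -> : [forall i, P i] by apply/forallP => i; move: (Hn i) => /= /negbFE.
by rewrite big1 // => i _; move: (Hn i) => /= /negbFE ->.
Qed.

Lemma multilinext_vertex s : F (vertex R s) = f (ktuple_of s).
Proof.
rewrite multilinext_terms (bigD1 (ktuple_of s)) ?kdisj_ktuple_of //= big1 ?addr0.
  rewrite /ml_term (eq_bigr (fun i => 1)) ?big1_eq ?mulr1 // => i _.
  by rewrite row_weight_vertex ?kdisj_ktuple_of // label_of_ktuple eqxx.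
move=> S /andP [HS nS].
rewrite /ml_term (eq_bigr (fun i => ((label_of S i == s i))%:R)); last first.
  by move=> i _; rewrite row_weight_vertex.
rewrite prod_indicator; case: forallP => [H|_]; last by rewrite mulr0.
move: nS; rewrite -(ktuple_of_label HS) (ktuple_of_ext (t := s)) ?eqxx // => i.
exact/eqP/H.
Qed.

Lemma row_weight_bound S i (x : M) : kdisj S -> in_simplices x ->
  0 <= row_weight S i (fun j => x i j) <= 1.
Proof.
move=> HS Hx; rewrite row_weight_label //; case: (label_of S i) => [j|].
  by rewrite in_simplices_le1 // andbT; case: (Hx i).
case: (Hx i) => H0 H1; rewrite subr_ge0 H1 /= lerBlDr lerDl.
exact: sumr_ge0.
Qed.

Definition fsum := \sum_(S | kdisj S) f S.

Lemma multilinext_bound (x : M) : (forall S, kdisj S -> 0 <= f S) ->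
  in_simplices x -> 0 <= F x <= fsum.
Proof.
move=> f0 Hx; rewrite multilinext_terms; apply/andP; split.
  apply: sumr_ge0 => S HS; apply: mulr_ge0; first exact: f0.
  by apply: prodr_ge0 => i _; case/andP: (row_weight_bound i HS Hx).
apply: ler_sum => S HS; rewrite /ml_term -[leRHS]mulr1.
apply: ler_wpM2l; first exact: f0.
by apply: prodr_ile1 => i _; exact: row_weight_bound.
Qed.

Lemma derive1_affine (a b : R) : derive1 (fun t : R => a + t * b) 0 = b.
Proof.
have -> : (fun t : R => a + t * b) = cst a + b \*: (@id R).
  by apply: funext => t /=; rewrite mulrC.
have H : is_derive (0:R) 1 (cst a + b \*: (@id R)) (0 + b *: (1:R^o)).
  exact: is_deriveD.
by rewrite derive1E (@derive_val _ _ _ _ _ _ _ H) add0r /GRing.scale /= mulr1.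
Qed.

Lemma partialF_marginal (x : M) i j : partialF F x i j = marginal F i j x.
Proof.
rewrite /partialF.
have -> : (fun t => F (x + t *: delta_mx i j)) = (fun t => F x + t * marginal F i j x).
  apply: funext => t.
  have -> : x + t *: delta_mx i j = setrow x i (fun l => x i l + t * (l == j)%:R).
    apply/matrixP => a b; rewrite !mxE; case: (eqVneq a i) => [->|nai] //=.
    by rewrite mulr0 addr0.
  rewrite row_affine_multilinext (row_affine_val x i row_affine_multilinext) -addrA.
  congr (_ + _); rewrite (eq_bigr _ (fun l _ => mulrDl _ _ _)) big_split /=.
  congr (_ + _); rewrite (bigD1 j) //= eqxx mulr1 big1 ?addr0 // => l /negPf ->.
  by rewrite mulr0 mul0r.
exact: derive1_affine.
Qed.

End MultilinearExtension.

(* consequences of k-submodularity for the marginals of F, first at the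
   vertices, then on the whole product of simplices by row_affine_ge0 *)
Section Marginals.
Variables (R : realType) (n k : nat).
Local Notation M := 'M[R]_(n, k).
Variable f : ktuple n k -> R.
Hypothesis fsub : k_submodular f.
Local Notation F := (multilinext f).
Implicit Types (s : 'I_n -> option 'I_k).

Definition relabel s i (o : option 'I_k) := fun i' => if i' == i then o else s i'.

Lemma setrow_vertex s i o :
  setrow (vertex R s) i (fun l => (o == Some l)%:R) = vertex R (relabel s i o).
Proof. by apply/matrixP=> a b; rewrite !mxE /relabel; case: (a == i). Qed.

Lemma marginal_vertex i j s :
  marginal F i j (vertex R s) =
  f (ktuple_of (relabel s i (Some j))) - f (ktuple_of (relabel s i None)).
Proof.
rewrite /marginal; have -> : erow R j = (fun l => (Some j == Some l)%:R).
  by apply: funext => l; rewrite /erow eqSome eq_sym.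
have -> : @zrow R k = (fun l => ((None : option 'I_k) == Some l)%:R) by [].
by rewrite !setrow_vertex !multilinext_vertex.
Qed.

(* k-submodularity of the two relabellings of i by j and by j' *)
Lemma pairwise_monotone_vertex i j j' s : j != j' ->
  0 <= marginal F i j (vertex R s) + marginal F i j' (vertex R s).
Proof.
move=> njj; rewrite !marginal_vertex.
have := k_submodular_label (relabel s i (Some j)) (relabel s i (Some j')) fsub.
rewrite (@ktuple_of_ext n k (meet_label _ _) (relabel s i None)); last first.
  move=> x; rewrite /meet_label /relabel; case: (x == i); rewrite ?eqxx //.
  by rewrite eqSome (negPf njj).
rewrite (@ktuple_of_ext n k (join_label _ _) (relabel s i None)); last first.
  move=> x; rewrite /join_label /relabel; case: (x == i); first by rewrite (negPf njj).
  by case: (s x) => // a; rewrite eqxx.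
move=> H; lra.
Qed.

Lemma pairwise_monotone i j j' (z : M) : j != j' -> in_simplices z ->
  0 <= marginal F i j z + marginal F i j' z.
Proof.
move=> njj; apply: (row_affine_ge0 (G := fun z => marginal F i j z + marginal F i j' z)).
  by apply: row_affine_add; apply: row_affine_marginal; exact: row_affine_multilinext.
by move=> s; exact: pairwise_monotone_vertex.
Qed.

(* k-submodularity with i labelled j on one side, r labelled l on the other *)
Lemma orthant_submodular_vertex i j r l s :
  marginal (marginal F i j) r l (vertex R s) <= 0.
Proof.
case: (eqVneq r i) => [->|nri].
  by rewrite [marginal (marginal _ _ _) _ _ _]/marginal !marginal_setrow subrr.
rewrite [marginal (marginal _ _ _) _ _ _]/marginal.
have -> : erow R l = (fun l' => (Some l == Some l')%:R).
  by apply: funext => l'; rewrite /erow eqSome eq_sym.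
have -> : @zrow R k = (fun l' => ((None : option 'I_k) == Some l')%:R) by [].
rewrite !setrow_vertex !marginal_vertex.
have := k_submodular_label (relabel (relabel s r None) i (Some j))
                           (relabel (relabel s r (Some l)) i None) fsub.
rewrite (@ktuple_of_ext n k (meet_label _ _) (relabel (relabel s r None) i None)); last first.
  move=> x; rewrite /meet_label /relabel; case: (x == i) => //; case: (x == r) => //.
  by rewrite eqxx.
rewrite (@ktuple_of_ext n k (join_label _ _) (relabel (relabel s r (Some l)) i (Some j)));
  last first.
  move=> x; rewrite /join_label /relabel; case: (x == i) => //; case: (x == r) => //.
  by case: (s x) => // a; rewrite eqxx.
move=> H; lra.
Qed.

Lemma orthant_submodular i j r l (z : M) : in_simplices z ->
  marginal (marginal F i j) r l z <= 0.
Proof.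
move=> Hz; rewrite -oppr_ge0.
apply: (row_affine_ge0 (G := fun z => - marginal (marginal F i j) r l z)) => //.
  by apply: row_affine_opp; do 2 apply: row_affine_marginal; exact: row_affine_multilinext.
by move=> s; rewrite oppr_ge0; exact: orthant_submodular_vertex.
Qed.

Lemma marginal_antitone i j (x y : M) : in_simplices x -> in_simplices y ->
  (forall a b, x a b <= y a b) -> marginal F i j y <= marginal F i j x.
Proof.
move=> Hx Hy Hxy; rewrite -subr_le0.
rewrite (row_affine_telescope x y (row_affine_marginal i j (row_affine_multilinext f))).
apply: sumr_le0 => r _; apply: sumr_le0 => l _.
rewrite mulr_ge0_le0 ?subr_ge0 //; apply: orthant_submodular.
exact: in_simplices_splice.
Qed.

End Marginals.

Section TaylorBounds.
Variables (R : realType) (n k : nat).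
Local Notation M := 'M[R]_(n, k).

Definition l1dist (x x' : M) := \sum_a \sum_b `|x' a b - x a b|.
Definition bounded_by (G : M -> R) B := forall x, in_simplices x -> `|G x| <= B.

Definition step_error (B d : R) := ((B + B) + (B + B)) * ((k * n)%:R * d) ^+ 2.

Lemma l1dist_ge0 x x' : 0 <= l1dist x x'.
Proof. by apply: sumr_ge0 => a _; apply: sumr_ge0 => b _. Qed.

Lemma l1dist_le (x x' : M) e :
  (forall a b, `|x' a b - x a b| <= e) -> l1dist x x' <= (k * n)%:R * e.
Proof.
move=> H; apply: le_trans (_ : \sum_(a < n) \sum_(b < k) e <= _).
  by apply: ler_sum => a _; apply: ler_sum => b _.
by rewrite !sumr_const !card_ord -mulrnA mulr_natl.
Qed.

Lemma marginal_bound G B r j z : bounded_by G B -> in_simplices z ->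
  `|marginal G r j z| <= B + B.
Proof.
move=> HB Hz; rewrite /marginal; apply: le_trans (ler_normB _ _) _.
by apply: lerD; apply: HB; [apply: in_simplices_erow|apply: in_simplices_zrow].
Qed.

Lemma row_affine_lipschitz G B (x x' : M) : row_affine G -> bounded_by G B ->
  in_simplices x -> in_simplices x' -> `|G x' - G x| <= (B + B) * l1dist x x'.
Proof.
move=> HG HB Hx Hx'; rewrite (row_affine_telescope x x' HG).
apply: le_trans (ler_norm_sum _ _ _) _; rewrite /l1dist mulr_sumr.
apply: ler_sum => r _; apply: le_trans (ler_norm_sum _ _ _) _.
rewrite mulr_sumr; apply: ler_sum => j _; rewrite normrM mulrC.
apply: (ler_wpM2r (normr_ge0 _)); apply: marginal_bound HB _.
exact: in_simplices_splice.
Qed.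

Lemma l1dist_setrow (x x' : M) r w :
  l1dist (setrow x r w) (setrow (splice x x' r) r w) <= l1dist x x'.
Proof.
apply: ler_sum => a _; apply: ler_sum => b _; rewrite !setrowE.
case: (a == r); first by rewrite subrr normr0.
by rewrite mxE; case: ifP; rewrite ?subrr ?normr0.
Qed.

Lemma marginal_splice_close G B (x x' : M) r j : row_affine G -> bounded_by G B ->
  in_simplices x -> in_simplices x' ->
  `|marginal G r j (splice x x' r) - marginal G r j x|
    <= ((B + B) + (B + B)) * l1dist x x'.
Proof.
move=> HG HB Hx Hx'; rewrite /marginal.
have -> : forall a1 a2 b1 b2 : R, a1 - a2 - (b1 - b2) = (a1 - b1) - (a2 - b2)
  by move=> *; ring.
have B0 : 0 <= B + B by apply: addr_ge0; apply: le_trans (HB _ Hx).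
have Hs := in_simplices_splice r Hx Hx'.
apply: le_trans (ler_normB _ _) _; rewrite mulrDl; apply: lerD.
  apply: le_trans (row_affine_lipschitz HG HB (in_simplices_erow _ _ Hx)
                                      (in_simplices_erow _ _ Hs)) _.
  exact: (ler_wpM2l B0 (l1dist_setrow _ _ _ _)).
apply: le_trans (row_affine_lipschitz HG HB (in_simplices_zrow _ Hx)
                                    (in_simplices_zrow _ Hs)) _.
exact: (ler_wpM2l B0 (l1dist_setrow _ _ _ _)).
Qed.

Lemma row_affine_taylor G B (x x' : M) : row_affine G -> bounded_by G B ->
  in_simplices x -> in_simplices x' ->
  `|G x' - G x - \sum_r \sum_j (x' r j - x r j) * marginal G r j x|
     <= ((B + B) + (B + B)) * l1dist x x' * l1dist x x'.
Proof.
move=> HG HB Hx Hx'; rewrite (row_affine_telescope x x' HG) -sumrB.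
apply: le_trans (ler_norm_sum _ _ _) _.
rewrite [X in _ <= X]mulrC /l1dist mulr_suml; apply: ler_sum => r _.
rewrite -sumrB; apply: le_trans (ler_norm_sum _ _ _) _.
rewrite mulr_suml; apply: ler_sum => j _.
rewrite -mulrBr normrM [X in _ <= X]mulrC.
apply: le_trans (ler_wpM2l (normr_ge0 _) (marginal_splice_close r j HG HB Hx Hx')) _.
by rewrite (mulrC `|x' r j - x r j|).
Qed.

Lemma row_affine_taylor_step G B (x w : M) d : row_affine G -> bounded_by G B ->
  0 <= d -> in_simplices x -> in_simplices (x + d *: w) ->
  (forall a b, `|w a b| <= 1) ->
  `|G (x + d *: w) - G x - d * \sum_r \sum_j w r j * marginal G r j x|
    <= step_error B d.
Proof.
move=> HG HB d0 Hx Hx' w1.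
have step_entry a b : (x + d *: w) a b - x a b = d * w a b.
  by rewrite !mxE addrAC subrr add0r.
have lin : \sum_r \sum_j ((x + d *: w) r j - x r j) * marginal G r j x =
           d * \sum_r \sum_j w r j * marginal G r j x.
  rewrite mulr_sumr; apply: eq_bigr => r _; rewrite mulr_sumr.
  by apply: eq_bigr => j _; rewrite step_entry mulrA.
have dist : l1dist x (x + d *: w) <= (k * n)%:R * d.
  apply: l1dist_le => a b; rewrite step_entry normrM (ger0_norm d0).
  by rewrite -[leRHS]mulr1; apply: ler_wpM2l.
have C0 : 0 <= (B + B) + (B + B).
  by have B0 := le_trans (normr_ge0 _) (HB _ Hx); rewrite !addr_ge0.
rewrite -lin; apply: le_trans (row_affine_taylor HG HB Hx Hx') _.
rewrite /step_error -mulrA expr2; apply: ler_wpM2l => //.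
by apply: ler_pM; rewrite ?l1dist_ge0.
Qed.

End TaylorBounds.

Section OneStep.
Variables (R : realType) (n k : nat).
Local Notation M := 'M[R]_(n, k).
Variable f : ktuple n k -> R.
Hypothesis f0 : forall S, kdisj S -> 0 <= f S.
Hypothesis fsub : k_submodular f.
Hypothesis k2 : (2 <= k)%N.
Local Notation F := (multilinext f).
Local Notation err d := (step_error n k (fsum f) d).

Lemma bounded_multilinext : bounded_by F (fsum f).
Proof.
move=> x Hx; have /andP [F_ge0 F_le] := multilinext_bound f0 Hx; by rewrite ger0_norm.
Qed.

(* some label of each element has a nonnegative marginal, as k >= 2 *)
Lemma max_marginal_ge0 (o : M) i : in_simplices o ->
  exists2 j, 0 <= marginal F i j o & forall l, marginal F i l o <= marginal F i j o.
Proof.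
move=> Ho; pose j0 : 'I_k := Ordinal (ltnW k2); pose j1 : 'I_k := Ordinal k2.
case: (@arg_maxP _ R 'I_k j0 xpredT (fun j => marginal F i j o) isT) => j _ Hj.
exists j => [|l]; last exact: Hj.
have nj : j0 != j1 by [].
have := pairwise_monotone fsub i nj Ho; have := Hj j0 isT; have := Hj j1 isT.
by move=> /= h1 h2 h3; lra.
Qed.

(* the combinatorial heart of the argument: apply the good direction
   property to the marginals at the comparison point o >= x *)
Lemma good_direction_descent (x o v : M) s c :
  in_simplices x -> in_simplices o -> (forall a b, x a b <= o a b) ->
  is_direction v -> good_direction c (\matrix_(i, j) marginal F i j x) v ->
  - \sum_i \sum_j (v i j - vertex R s i j) * marginal F i j o
    <= c * \sum_i \sum_j v i j * marginal F i j x.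
Proof.
move=> Hx Ho Hxo [_ v_sum] Hgood.
have [jstar jstar_ge0 jstar_max] := fin_all_exists2 (fun i => max_marginal_ge0 i Ho).
pose a := \matrix_(i, j) marginal F i j o.
have a_pairwise i (j j' : 'I_k) : j != j' -> 0 <= a i j + a i j'.
  by move=> njj; rewrite !mxE; exact: pairwise_monotone.
have a_below i j : a i j <= (\matrix_(i, j) marginal F i j x) i j.
  by rewrite !mxE; exact: marginal_antitone.
have -> : \sum_i \sum_j v i j * marginal F i j x =
          \sum_i \sum_j v i j * (\matrix_(i, j) marginal F i j x) i j.
  by apply: eq_bigr => i _; apply: eq_bigr => j _; rewrite mxE.
apply: le_trans (Hgood a a_pairwise a_below jstar).
rewrite -sumrN; apply: ler_sum => i _.
rewrite -sumrN (eq_bigr (fun j => vertex R s i j * marginal F i j o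
                                 - v i j * marginal F i j o)); last first.
  by move=> j _; rewrite -mulNr opprB mulrBl.
rewrite [X in _ <= X](eq_bigr (fun j => v i j * marginal F i (jstar i) o
                                        - v i j * marginal F i j o)); last first.
  by move=> j _; rewrite !mxE mulrBr.
rewrite !sumrB -mulr_suml v_sum mul1r lerD2r.
apply: le_trans (_ : \sum_j vertex R s i j * marginal F i (jstar i) o <= _).
  apply: ler_sum => j _; apply: ler_wpM2l; last exact: jstar_max.
  by case: (in_simplices_vertex R s i).
rewrite -mulr_suml -[leRHS]mul1r ler_wpM2r //.
by case: (in_simplices_vertex R s i).
Qed.

Lemma one_step (x o v : M) s d c : 0 <= d -> 0 <= c ->
  in_simplices x -> in_simplices (x + d *: v) ->
  in_simplices o -> in_simplices (o + d *: (v - vertex R s)) ->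
  (forall a b, x a b <= o a b) ->
  is_direction v -> good_direction c (\matrix_(i, j) marginal F i j x) v ->
  F o - F (o + d *: (v - vertex R s))
    <= c * (F (x + d *: v) - F x + err d) + err d.
Proof.
move=> d0 c0 Hx Hx' Ho Ho' Hxo Hv Hgood.
have v_le1 a b : `|v a b| <= 1.
  by case: Hv => /(_ a b) /andP [v0 v1] _; rewrite ger0_norm.
have vp1 a b : `|(v - vertex R s) a b| <= 1.
  have /andP [v0 v1] := Hv.1 a b.
  have [/(_ b) p0 _] := in_simplices_vertex R s a.
  have p1 := in_simplices_le1 a b (in_simplices_vertex R s).
  move: p0 p1; rewrite !mxE ler_norml => p0 p1.
  by apply/andP; split; lra.
pose Y := \sum_i \sum_j v i j * marginal F i j x.
pose Q := \sum_i \sum_j (v - vertex R s) i j * marginal F i j o.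
have gain : d * Y <= F (x + d *: v) - F x + err d.
  have := row_affine_taylor_step (row_affine_multilinext f) bounded_multilinext d0 Hx Hx' v_le1.
  by rewrite ler_norml => /andP [+ _]; rewrite -/Y; lra.
have loss : F o - F (o + d *: (v - vertex R s)) <= - (d * Q) + err d.
  have := row_affine_taylor_step (row_affine_multilinext f) bounded_multilinext d0 Ho Ho' vp1.
  by rewrite ler_norml => /andP [+ _]; rewrite -/Q; lra.
have descent : - Q <= c * Y.
  have entry i j : (v - vertex R s) i j = v i j - vertex R s i j by rewrite !mxE.
  rewrite /Q; under eq_bigr do under eq_bigr do rewrite entry.
  exact: good_direction_descent.
have := ler_wpM2l d0 descent; rewrite mulrN mulrCA => scaled.
have := ler_wpM2l c0 gain; lra.
Qed.

End OneStep.

Section Trajectory.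
Variables (R : realType) (n k : nat) (N : nat) (v : nat -> 'M[R]_(n, k)).
Hypothesis N_gt0 : (0 < N)%N.
Hypothesis v_dir : forall t, (t < N)%N -> is_direction (v t).
Local Notation x := (traj N v).
Local Notation d := (N%:R^-1 : R).

Lemma step_ge0 : 0 <= d.
Proof. by rewrite invr_ge0 ler0n. Qed.

Lemma steps_total : N%:R * d = 1.
Proof. by rewrite mulfV // pnatr_eq0 -lt0n. Qed.

Lemma elapsed_le1 t : (t <= N)%N -> t%:R * d <= 1.
Proof.
move=> Ht; apply: le_trans (_ : t%:R * d <= N%:R * d) _; last by rewrite steps_total.
by apply: ler_wpM2r; rewrite ?step_ge0 ?ler_nat.
Qed.

Lemma traj0 : x 0 = 0.
Proof. by rewrite /traj big_ord0. Qed.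

Lemma traj_succ t : x t.+1 = x t + d *: v t.
Proof. by rewrite /traj big_ord_recr. Qed.

Lemma traj_rows t : (t <= N)%N ->
  (forall i j, 0 <= x t i j) /\ (forall i, \sum_j x t i j = t%:R * d).
Proof.
elim: t => [|t IH] Ht.
  rewrite traj0; split=> [i j|i]; first by rewrite mxE.
  by rewrite mul0r big1 // => j _; rewrite mxE.
have [x_ge0 x_sum] := IH (ltnW Ht); have [v_bnd v_sum] := v_dir Ht.
rewrite traj_succ; split=> [i j|i].
  rewrite !mxE addr_ge0 // mulr_ge0 ?step_ge0 //.
  by case/andP: (v_bnd i j).
under eq_bigr do rewrite !mxE.
by rewrite big_split /= x_sum -mulr_sumr v_sum mulr1 -addn1 natrD mulrDl mul1r.
Qed.

Lemma traj_simplices t : (t <= N)%N -> in_simplices (x t).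
Proof.
move=> Ht i; have [x_ge0 x_sum] := traj_rows Ht.
by split; [exact: x_ge0 | rewrite x_sum elapsed_le1].
Qed.

Lemma traj_inP : inP (x N).
Proof.
have [x_ge0 x_sum] := traj_rows (leqnn N).
split=> [i j|i]; last by rewrite x_sum steps_total.
by rewrite x_ge0 in_simplices_le1 //; exact: traj_simplices.
Qed.

Variable s : 'I_n -> option 'I_k.

Definition companion t := x t + (1 - t%:R * d) *: vertex R s.

Lemma companionE t a b :
  companion t a b = x t a b + (1 - t%:R * d) * vertex R s a b.
Proof. by rewrite !mxE. Qed.

Lemma companion0 : companion 0 = vertex R s.
Proof. by rewrite /companion traj0 mul0r subr0 scale1r add0r. Qed.

Lemma companionN : companion N = x N.
Proof. by rewrite /companion steps_total subrr scale0r addr0. Qed.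

Lemma companion_succ t : companion t.+1 = companion t + d *: (v t - vertex R s).
Proof.
by apply/matrixP => a b; rewrite /companion traj_succ !mxE -addn1 natrD; ring.
Qed.

Lemma companion_simplices t : (t <= N)%N -> in_simplices (companion t).
Proof.
move=> Ht i; have [x_ge0 x_sum] := traj_rows Ht.
have [p_ge0 p_sum] := in_simplices_vertex R s i.
have rest : 0 <= 1 - t%:R * d by rewrite subr_ge0 elapsed_le1.
split=> [j|].
  by rewrite companionE addr_ge0 ?mulr_ge0.
under eq_bigr do rewrite companionE.
rewrite big_split /= x_sum -mulr_sumr.
have := ler_wpM2l rest p_sum; lra.
Qed.

Lemma traj_le_companion t : (t <= N)%N -> forall a b, x t a b <= companion t a b.
Proof.
move=> Ht a b; rewrite companionE lerDl mulr_ge0 //.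
  by rewrite subr_ge0 elapsed_le1.
by case: (in_simplices_vertex R s a).
Qed.

End Trajectory.

Section Guarantee.
Variables (R : realType) (n k : nat) (f : ktuple n k -> R) (c : R).
Hypothesis k2 : (2 <= k)%N.
Hypothesis f0 : forall S, kdisj S -> 0 <= f S.
Hypothesis fsub : k_submodular f.
Hypothesis c0 : 0 <= c.
Variables (N : nat) (v : nat -> 'M[R]_(n, k)).
Hypothesis N_gt0 : (0 < N)%N.
Hypothesis v_good : forall t, (t < N)%N ->
  is_direction (v t) /\
  good_direction c (\matrix_(i, j) partialF (multilinext f) (traj N v t) i j) (v t).
Variable s : 'I_n -> option 'I_k.
Local Notation F := (multilinext f).
Local Notation x := (traj N v).
Local Notation d := (N%:R^-1 : R).
Local Notation err := (step_error n k (fsum f) d).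

Let v_dir t (Ht : (t < N)%N) : is_direction (v t) := (v_good Ht).1.

Definition potential t := F (companion N v s t) + c * F (x t).

Lemma potential_step t : (t < N)%N -> potential t - potential t.+1 <= (c + 1) * err.
Proof.
move=> Ht; have [Hdir Hgood] := v_good Ht.
have grad : \matrix_(i, j) partialF F (x t) i j = \matrix_(i, j) marginal F i j (x t).
  by apply/matrixP => i j; rewrite !mxE partialF_marginal.
rewrite grad in Hgood.
have Hx := traj_simplices N_gt0 v_dir (ltnW Ht).
have Hx' := traj_simplices N_gt0 v_dir Ht; rewrite traj_succ in Hx'.
have Ho := companion_simplices N_gt0 v_dir s (ltnW Ht).
have Ho' := companion_simplices N_gt0 v_dir s Ht; rewrite companion_succ in Ho'.
have := one_step f0 fsub k2 (step_ge0 R N) c0 Hx Hx' Ho Ho'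
  (traj_le_companion v N_gt0 s (ltnW Ht)) Hdir Hgood.
by rewrite /potential companion_succ traj_succ; lra.
Qed.

(* summing the N steps: the total error is (c+1) N err = (c+1) C/N *)
Lemma approximation_bound :
  F (vertex R s) <= (c + 1) * (F (x N) + step_error n k (fsum f) 1 / N%:R).
Proof.
have total : potential 0 - potential N <= N%:R * ((c + 1) * err).
  have -> : potential 0 - potential N = \sum_(0 <= t < N) (potential t - potential t.+1).
    rewrite (eq_bigr (fun t => - potential t.+1 - - potential t)) => [|t _].
      by rewrite telescope_sumr // opprK addrC.
    by rewrite opprK addrC.
  rewrite mulr_natl -[in X in _ *+ X](subn0 N) -sumr_const_nat.
  by apply: ler_sum_nat => t /andP [_ Ht]; exact: potential_step.
have err_total :
    N%:R * ((c + 1) * err) = (c + 1) * (step_error n k (fsum f) 1 / N%:R).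
  by rewrite /step_error !expr2; field; rewrite pnatr_eq0 -lt0n.
have F0 : 0 <= F (x 0) by case/andP: (multilinext_bound f0 (traj_simplices N_gt0 v_dir (leq0n N))).
have := ler_wpM2l c0 F0.
move: total; rewrite /potential companion0 companionN //.
lra.
Qed.

End Guarantee.

Lemma kOPT_attained (R : realType) n k (f : ktuple n k -> R) :
  (forall S, kdisj S -> 0 <= f S) -> exists2 S, kdisj S & kOPT f <= f S.
Proof.
move=> f0; rewrite /kOPT.
apply: (big_ind (fun y => exists2 S, kdisj S & y <= f S)) => [|y z [S1 H1 h1] [S2 H2 h2]|S HS].
- by exists (ktuple_of (fun _ => None)); rewrite ?kdisj_ktuple_of ?f0 ?kdisj_ktuple_of.
- by case: (leP y z) => _; [exists S2 | exists S1].
- by exists S.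
Qed.

Lemma inv_steps_small (R : realType) (C eps : R) (N : nat) : 0 < eps ->
  ((Num.truncn (C / eps)).+1 <= N)%N -> C / N%:R <= eps.
Proof.
move=> eps0 HN; have N_gt0 : (0 < N)%N by apply: leq_trans HN.
have N0 : 0 < (N%:R : R) by rewrite ltr0n.
have h : C < N%:R * eps.
  rewrite -ltr_pdivrMr //.
  by apply: lt_le_trans (truncnS_gt _) _; rewrite ler_nat.
by rewrite ler_pdivrMr // mulrC ltW.
Qed.

Theorem mainTheorem4 (R : realType) (n k : nat) (f : ktuple n k -> R) (c : R) :
  (2 <= k)%N ->
  (forall S, kdisj S -> 0 <= f S) ->
  k_submodular f ->
  0 < c ->
  forall eps : R, 0 < eps ->
  exists N0 : nat, forall N : nat, (N0 <= N)%N ->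
  forall v : nat -> 'M[R]_(n, k),
    (forall t : nat, (t < N)%N ->
       is_direction (v t) /\
       good_direction c
         (\matrix_(i, j) partialF (multilinext f) (traj N v t) i j) (v t)) ->
    inP (traj N v N) /\
    (c + 1)^-1 * kOPT f - eps <= multilinext f (traj N v N).
Proof.
move=> k2 f0 fsub c_gt0 eps eps0.
pose C := step_error n k (fsum f) 1.
exists (Num.truncn (C / eps)).+1 => N HN v Hv.
have N_gt0 : (0 < N)%N by apply: leq_trans HN.
split; first by apply: traj_inP N_gt0 _ => t /Hv [].
have [S HS optS] := kOPT_attained f0.
have := approximation_bound k2 f0 fsub (ltW c_gt0) N_gt0 Hv (label_of S).
rewrite multilinext_vertex ktuple_of_label // => bound.
have small : C / N%:R <= eps := inv_steps_small eps0 HN.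
rewrite lerBlDr ler_pdivrMl ?addr_gt0 //.
apply: le_trans optS (le_trans bound _).
by apply: ler_wpM2l; rewrite ?lerD2l // addr_ge0 // ltW.
Qed.
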